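(* Consider $N$ material points $(P_i,m_i)$ whose Cartesian coordinates are given by a smooth map $\mathbf X(\mathbf q,t)\in\mathbb R^{3N}$, $\mathbf q\in\mathbb R^\ell$, and let $\mathbf Q=(m_1\dot P_1,\dots,m_N\dot P_N)\in\mathbb R^{3N}$ be the vector of momenta. For $r\ge0$ define $\mathcal T_r=\frac12\,\mathbf Q^{(r)}\cdot\mathbf X^{(r+1)}=\frac12\sum_{i=1}^N m_i|P_i^{(r+1)}|^2$, viewed as a function of $\mathbf q,\dots,\mathbf q^{(r+1)},t$. Then for every $k=1,\dots,\ell$, $$\mathbf Q^{(r+1)}\cdot\frac{\partial\mathbf X}{\partial q_k}=\frac{d}{dt}\frac{\partial\mathcal T_r}{\partial q_k^{(r+1)}}-\frac1{r+1}\frac{\partial\mathcal T_r}{\partial q_k^{(r)}}.$$ Equivalently, $J_{\mathbf q}^T\mathbf X\,\mathbf Q^{(r+1)}=-\frac1{r+1}\mathcal O_r[\mathcal T_r]$.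
   Context: $\mathbf q^{(h)}$ denotes the $h$-th time derivative (with $\mathbf q^{(0)}=\mathbf q$), treated as independent variables; $\mathbf X^{(h)}$ is the $h$-th total time derivative of $\mathbf X(\mathbf q(t),t)$ expressed as a function of $\mathbf q,\dots,\mathbf q^{(h)},t$. For $F(\mathbf q,\dots,\mathbf q^{(k)},t)$, $\frac{dF}{dt}=\partial_tF+\sum_{j=0}^k\nabla_{\mathbf q^{(j)}}F\cdot\mathbf q^{(j+1)}$. For $\mathbf w\in\mathbb R^{3N}$, $J_{\mathbf q}^T\mathbf X\,\mathbf w$ is the $\ell$-vector with components $\mathbf w\cdot\partial\mathbf X/\partial q_k$ (Lagrangian components of $\mathbf w$). $\mathcal O_r[\mathcal Y_r]=\nabla_{\mathbf q^{(r)}}\mathcal Y_r-(r+1)\frac{d}{dt}\nabla_{\mathbf q^{(r+1)}}\mathcal Y_r$. *)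

From Stdlib Require Import Reals Lra List Arith ClassicalEpsilon.
Import ListNotations.
Open Scope R_scope.

(** The derivative of a real function, chosen classically: it is the unique
    [l] with [derivable_pt_lim f x l] whenever f is differentiable at x. *)
Definition deriv (f : R -> R) (x : R) : R :=
  epsilon (inhabits 0%R) (fun l => derivable_pt_lim f x l).

Definition sumR (n : nat) (f : nat -> R) : R :=
  fold_right Rplus 0 (map f (seq 0 n)).

Definition upd1 (z : nat -> R) (i : nat) (x : R) : nat -> R :=
  fun j => if Nat.eqb j i then x else z j.

Definition pdv (i : nat) (f : (nat -> R) -> R) (z : nat -> R) : R :=
  deriv (fun x => f (upd1 z i x)) (z i).

Definition iter_pd (L : list nat) (f : (nat -> R) -> R) : (nat -> R) -> R :=
  fold_right (fun i g => pdv i g) f L.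

Definition depends_only_on (n : nat) (f : (nat -> R) -> R) : Prop :=
  forall z z', (forall i, (i < n)%nat -> z i = z' i) -> f z = f z'.

Definition continuous_n (n : nat) (f : (nat -> R) -> R) : Prop :=
  forall z eps, 0 < eps -> exists delta, 0 < delta /\
    forall z', (forall i, (i < n)%nat -> Rabs (z' i - z i) < delta) ->
      Rabs (f z' - f z) < eps.

Definition smooth_n (n : nat) (f : (nat -> R) -> R) : Prop :=
  depends_only_on n f /\
  forall L : list nat, Forall (fun i => (i < n)%nat) L ->
    continuous_n n (iter_pd L f) /\
    (forall i z, (i < n)%nat ->
       exists l, derivable_pt_lim (fun x => iter_pd L f (upd1 z i x)) (z i) l).

(** A configuration map X(q,t) in R^{3N}, q in R^l: component j of X is
    [X j q t] (j < 3N; components 3i,3i+1,3i+2 are the coordinates of P_i),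
    each depending only on q_0..q_{l-1} and t, and smooth in (q,t). *)
Definition smooth_config (N l : nat) (X : nat -> (nat -> R) -> R -> R) : Prop :=
  forall j, (j < 3 * N)%nat ->
    (forall q q' t, (forall i, (i < l)%nat -> q i = q' i) -> X j q t = X j q' t) /\
    smooth_n (S l) (fun z => X j z (z l)).

(** A jet point: [J h k] = q_k^{(h)} (h-th time derivative, k < l),
    treated as independent variables. *)
Definition Jet := nat -> nat -> R.
Definition JetFun := Jet -> R -> R.

Definition upd2 (J : Jet) (h k : nat) (x : R) : Jet :=
  fun a b => if andb (Nat.eqb a h) (Nat.eqb b k) then x else J a b.

Definition jpd (h k : nat) (F : JetFun) : JetFun :=
  fun J t => deriv (fun x => F (upd2 J h k x) t) (J h k).

Definition jdt (F : JetFun) : JetFun :=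
  fun J t => deriv (fun s => F J s) t.

Definition tder (l K : nat) (F : JetFun) : JetFun :=
  fun J t => jdt F J t +
    sumR (S K) (fun h => sumR l (fun k => jpd h k F J t * J (S h) k)).

Fixpoint jder (l K : nat) (F : JetFun) (n : nat) : JetFun :=
  match n with
  | O => F
  | S n' => tder l (K + n') (jder l K F n')
  end.

Definition Xh (l : nat) (X : nat -> (nat -> R) -> R -> R) (h j : nat) : JetFun :=
  jder l 0 (fun J t => X j (J 0%nat) t) h.

(** momenta Q = (m_1 P_1', ..., m_N P_N'): component j belongs to point j/3 *)
Definition Qmom (l : nat) (m : nat -> R) (X : nat -> (nat -> R) -> R -> R)
  (j : nat) : JetFun :=
  fun J t => m (j / 3)%nat * Xh l X 1 j J t.

Definition Qh (l : nat) (m : nat -> R) (X : nat -> (nat -> R) -> R -> R)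
  (r j : nat) : JetFun :=
  jder l 1 (Qmom l m X j) r.

Definition Tr (N l : nat) (m : nat -> R) (X : nat -> (nat -> R) -> R -> R)
  (r : nat) : JetFun :=
  fun J t => / 2 * sumR (3 * N) (fun j => Qh l m X r j J t * Xh l X (S r) j J t).

(* The jet variables q_k^(h) and t are independent, and [jpd], [jdt] are built from a
   classically chosen derivative, so they only behave as derivatives where the limits exist.
   Every function in the statement is a polynomial in the jet variables with coefficients
   smooth in (q, t) ([jet_poly]); on this class the partial derivatives are derivations that
   commute with each other and with the partial in t (Schwarz).  This gives the rule
     d/dq_k^(h+1) (dF/dt) = d/dt (dF/dq_k^(h+1)) + dF/dq_k^(h),
   and iterating it on X^(n) "cancels the dots":
     dX^(n)/dq_k^(n) = dX/dq_k,   dX^(n+1)/dq_k^(n) = (n+1) d/dt (dX/dq_k).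
   Since T_r = 1/2 sum_j m_j (X_j^(r+1))^2, its derivatives in q_k^(r+1) and q_k^(r) are
   sum_j m_j X_j^(r+1) dX_j/dq_k and (r+1) sum_j m_j X_j^(r+1) d/dt (dX_j/dq_k); the time
   derivative of the first minus 1/(r+1) times the second is sum_j m_j X_j^(r+2) dX_j/dq_k. *)

From Stdlib Require Import Reals List Lia Lra ClassicalEpsilon FunctionalExtensionality.
From Coquelicot Require Import Coquelicot.
Open Scope bool_scope.
Open Scope R_scope.

Lemma deriv_unique f x d : derivable_pt_lim f x d -> deriv f x = d.
Proof.
  intro Hd. unfold deriv.
  apply (uniqueness_limite f x); [|exact Hd].
  apply (epsilon_spec (inhabits 0) (fun d => derivable_pt_lim f x d)).
  now exists d.
Qed.

Lemma derivable_deriv f x d : derivable_pt_lim f x d -> derivable_pt_lim f x (deriv f x).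
Proof. intro Hd. now rewrite (deriv_unique _ _ _ Hd). Qed.

Lemma deriv_const_fun f x : (forall y, f y = f x) -> deriv f x = 0.
Proof.
  intro Hf. apply deriv_unique.
  replace f with (fun _ : R => f x) by (apply functional_extensionality; auto).
  apply derivable_pt_lim_const.
Qed.

Lemma sumR_S n f : sumR (S n) f = sumR n f + f n.
Proof.
  unfold sumR. rewrite seq_S, map_app, fold_right_app. simpl.
  generalize (map f (seq 0 n)). induction l; simpl; lra.
Qed.

Lemma sumR_ext n f g : (forall i, (i < n)%nat -> f i = g i) -> sumR n f = sumR n g.
Proof. induction n; intro H; auto. rewrite !sumR_S, IHn, H; auto. Qed.

Lemma sumR_plus n f g : sumR n (fun i => f i + g i) = sumR n f + sumR n g.
Proof. induction n; [unfold sumR; simpl; ring|]. rewrite !sumR_S, IHn; ring. Qed.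

Lemma sumR_minus n f g : sumR n (fun i => f i - g i) = sumR n f - sumR n g.
Proof. induction n; [unfold sumR; simpl; ring|]. rewrite !sumR_S, IHn; ring. Qed.

Lemma sumR_scal n c f : sumR n (fun i => c * f i) = c * sumR n f.
Proof. induction n; [unfold sumR; simpl; ring|]. rewrite !sumR_S, IHn; ring. Qed.

Lemma sumR_zero n f : (forall i, (i < n)%nat -> f i = 0) -> sumR n f = 0.
Proof. induction n; intro H; [reflexivity|]. rewrite sumR_S, IHn, H; auto; ring. Qed.

Lemma sumR_delta n a f :
  sumR n (fun i => if (i =? a)%nat then f i else 0) = if (a <? n)%nat then f a else 0.
Proof.
  induction n; auto. rewrite sumR_S, IHn.
  destruct (Nat.eqb_spec n a), (Nat.ltb_spec a n), (Nat.ltb_spec a (S n)); subst; lia || lra.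
Qed.

Lemma sumR_vanishing_tail m n f :
  (n <= m)%nat -> (forall i, (n <= i < m)%nat -> f i = 0) -> sumR m f = sumR n f.
Proof.
  induction m; intros Hnm Hf.
  - now replace n with 0%nat by lia.
  - destruct (Nat.eq_dec n (S m)) as [->|Hn]; auto.
    rewrite sumR_S, IHm, Hf; try lia; [ring|intros; apply Hf; lia].
Qed.

Lemma upd1_eq z i x : upd1 z i x i = x.
Proof. unfold upd1. now rewrite Nat.eqb_refl. Qed.

Lemma upd1_neq z i j x : j <> i -> upd1 z i x j = z j.
Proof. intro H. unfold upd1. now destruct (Nat.eqb_spec j i). Qed.

Lemma upd1_id z i : upd1 z i (z i) = z.
Proof.
  apply functional_extensionality; intro j. unfold upd1.
  destruct (Nat.eqb_spec j i); congruence.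
Qed.

Lemma upd1_upd1_eq z i x y : upd1 (upd1 z i x) i y = upd1 z i y.
Proof.
  apply functional_extensionality; intro j. unfold upd1. now destruct (j =? i)%nat.
Qed.

Lemma upd1_upd1_comm z i j x y : i <> j -> upd1 (upd1 z i x) j y = upd1 (upd1 z j y) i x.
Proof.
  intro Hij. apply functional_extensionality; intro a. unfold upd1.
  destruct (Nat.eqb_spec a j), (Nat.eqb_spec a i); congruence.
Qed.

Lemma smooth_derivable n g i z : smooth_n n g -> (i < n)%nat ->
  derivable_pt_lim (fun x => g (upd1 z i x)) (z i) (pdv i g z).
Proof.
  intros g_smooth Hi. destruct (proj2 g_smooth nil (Forall_nil _)) as [_ Hd].
  destruct (Hd i z Hi) as [d Hdz]. exact (derivable_deriv _ _ _ Hdz).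
Qed.

Lemma smooth_pdv n g i : smooth_n n g -> (i < n)%nat -> smooth_n n (pdv i g).
Proof.
  intros g_smooth Hi. split.
  - intros z z' Hzz'. unfold pdv. rewrite (Hzz' i Hi). f_equal.
    apply functional_extensionality; intro x. apply (proj1 g_smooth).
    intros j Hj. unfold upd1. destruct (j =? i)%nat; auto.
  - intros L HL. change (pdv i g) with (iter_pd (i :: nil) g).
    unfold iter_pd. rewrite <- fold_right_app.
    apply (proj2 g_smooth). apply Forall_app; auto.
Qed.

Lemma smooth_continuous_2d n h a b z : smooth_n n h ->
  continuity_2d_pt (fun u v => h (upd1 (upd1 z a u) b v)) (z a) (z b).
Proof.
  intros Hh eps.
  destruct (proj1 (proj2 Hh nil (Forall_nil _)) z eps (cond_pos eps)) as [d [Hd Hz]].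
  exists (mkposreal d Hd). intros u v Hu Hv. simpl in Hu, Hv.
  rewrite !upd1_id. apply Hz. intros i _. unfold upd1.
  destruct (Nat.eqb_spec i b), (Nat.eqb_spec i a); subst; auto.
  rewrite Rminus_diag, Rabs_R0. exact Hd.
Qed.

Lemma Derive_of_lim f x d : derivable_pt_lim f x d -> Derive f x = d.
Proof. intro H. apply is_derive_unique, is_derive_Reals, H. Qed.

Lemma ex_derive_of_lim f x d : derivable_pt_lim f x d -> ex_derive f x.
Proof. intro H. exists d. apply is_derive_Reals, H. Qed.

Lemma smooth_derivable_fst n h a b z u v : smooth_n n h -> (a < n)%nat -> a <> b ->
  derivable_pt_lim (fun x => h (upd1 (upd1 z a x) b v)) u (pdv a h (upd1 (upd1 z a u) b v)).
Proof.
  intros Hh Ha Hab. generalize (smooth_derivable n h a (upd1 (upd1 z a u) b v) Hh Ha).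
  rewrite upd1_neq, upd1_eq by auto.
  replace (fun x => h (upd1 (upd1 (upd1 z a u) b v) a x))
    with (fun x => h (upd1 (upd1 z a x) b v)); auto.
  apply functional_extensionality; intro x.
  now rewrite (upd1_upd1_comm (upd1 z a u) b a), upd1_upd1_eq by auto.
Qed.

Lemma smooth_derivable_snd n h a b z u v : smooth_n n h -> (b < n)%nat ->
  derivable_pt_lim (fun x => h (upd1 (upd1 z a u) b x)) v (pdv b h (upd1 (upd1 z a u) b v)).
Proof.
  intros Hh Hb. generalize (smooth_derivable n h b (upd1 (upd1 z a u) b v) Hh Hb).
  rewrite upd1_eq.
  replace (fun x => h (upd1 (upd1 (upd1 z a u) b v) b x))
    with (fun x => h (upd1 (upd1 z a u) b x)); auto.
  apply functional_extensionality; intro x. now rewrite upd1_upd1_eq.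
Qed.

Lemma pdv_comm n g a b z : smooth_n n g -> (a < n)%nat -> (b < n)%nat ->
  pdv a (pdv b g) z = pdv b (pdv a g) z.
Proof.
  intros Hg Ha Hb. destruct (Nat.eq_dec a b) as [<-|Hab]; [reflexivity|].
  set (P := fun u v => upd1 (upd1 z a u) b v).
  assert (Da : forall h u v, smooth_n n h ->
            derivable_pt_lim (fun x => h (P x v)) u (pdv a h (P u v)))
    by (intros; now apply (smooth_derivable_fst n)).
  assert (Db : forall h u v, smooth_n n h ->
            derivable_pt_lim (fun x => h (P u x)) v (pdv b h (P u v)))
    by (intros; now apply (smooth_derivable_snd n)).
  assert (E_b : forall v, (fun u => Derive (fun t => g (P u t)) v) = (fun u => pdv b g (P u v))).
  { intro v. apply functional_extensionality; intro u. apply Derive_of_lim, Db, Hg. }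
  assert (E_a : forall u, (fun v => Derive (fun t => g (P t v)) u) = (fun v => pdv a g (P u v))).
  { intro u. apply functional_extensionality; intro v. apply Derive_of_lim, Da, Hg. }
  assert (Schwarz_P := Schwarz (fun u v => g (P u v)) (z a) (z b)).
  rewrite E_b, E_a, (Derive_of_lim _ _ _ (Da _ _ _ (smooth_pdv _ _ _ Hg Hb))),
    (Derive_of_lim _ _ _ (Db _ _ _ (smooth_pdv _ _ _ Hg Ha))) in Schwarz_P.
  replace (P (z a) (z b)) with z in Schwarz_P by (unfold P; now rewrite !upd1_id).
  apply Schwarz_P; clear Schwarz_P.
  - exists (mkposreal 1 Rlt_0_1). intros u v _ _. rewrite E_b, E_a.
    repeat split; eapply ex_derive_of_lim; apply Da || apply Db; auto using smooth_pdv.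
  - replace (fun u v => Derive (fun z0 => Derive (fun t => g (P z0 t)) v) u)
      with (fun u v => pdv a (pdv b g) (P u v)).
    + apply (smooth_continuous_2d n); auto using smooth_pdv.
    + apply functional_extensionality; intro u; apply functional_extensionality; intro v.
      rewrite E_b. symmetry. apply Derive_of_lim, Da; auto using smooth_pdv.
  - replace (fun u v => Derive (fun z0 => Derive (fun t => g (P t z0)) u) v)
      with (fun u v => pdv b (pdv a g) (P u v)).
    + apply (smooth_continuous_2d n); auto using smooth_pdv.
    + apply functional_extensionality; intro u; apply functional_extensionality; intro v.
      rewrite E_a. symmetry. apply Derive_of_lim, Db; auto using smooth_pdv.
Qed.

Ltac jetfun_ext :=
  apply functional_extensionality; intro J; apply functional_extensionality; intro t.

Definition jconst (c : R) : JetFun := fun _ _ => c.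
Definition jvar (h k : nat) : JetFun := fun J _ => J h k.
Definition jadd (F G : JetFun) : JetFun := fun J t => F J t + G J t.
Definition jmul (F G : JetFun) : JetFun := fun J t => F J t * G J t.
Definition jsum (n : nat) (F : nat -> JetFun) : JetFun := fun J t => sumR n (fun i => F i J t).

Lemma upd2_id J h k : upd2 J h k (J h k) = J.
Proof.
  apply functional_extensionality; intro a; apply functional_extensionality; intro b.
  unfold upd2. destruct (Nat.eqb_spec a h), (Nat.eqb_spec b k); subst; auto.
Qed.

Lemma jsum_S n F : jsum (S n) F = jadd (jsum n F) (F n).
Proof. jetfun_ext. apply sumR_S. Qed.

Lemma jsum_ext n F G : (forall i, (i < n)%nat -> F i = G i) -> jsum n F = jsum n G.
Proof. intro H. jetfun_ext. apply sumR_ext. intros i Hi. now rewrite H. Qed.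

Section JetCalculus.
Variable l : nat.

Definition jet_point (J : Jet) (t : R) : nat -> R :=
  fun i => if (i <? l)%nat then J 0%nat i else t.

Definition position_var (h k : nat) : bool := (h =? 0)%nat && (k <? l)%nat.

Definition jsmooth (g : (nat -> R) -> R) : JetFun := fun J t => g (jet_point J t).

Inductive jet_poly : JetFun -> Prop :=
| jet_poly_const c : jet_poly (jconst c)
| jet_poly_var h k : jet_poly (jvar h k)
| jet_poly_smooth g : smooth_n (S l) g -> jet_poly (jsmooth g)
| jet_poly_add F G : jet_poly F -> jet_poly G -> jet_poly (jadd F G)
| jet_poly_mul F G : jet_poly F -> jet_poly G -> jet_poly (jmul F G).

#[local] Hint Constructors jet_poly : core.

Lemma position_var_lt h k : position_var h k = true -> (k < S l)%nat.
Proof. intro Hhk. apply andb_prop in Hhk as [_ Hk]. apply Nat.ltb_lt in Hk. lia. Qed.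

Lemma jet_point_position J t h k : position_var h k = true -> jet_point J t k = J h k.
Proof.
  intro Hhk. apply andb_prop in Hhk as [Hh Hk].
  apply Nat.eqb_eq in Hh; subst. unfold jet_point. now rewrite Hk.
Qed.

Lemma jet_point_upd2 J h k x t : position_var h k = true ->
  jet_point (upd2 J h k x) t = upd1 (jet_point J t) k x.
Proof.
  intro Hhk. apply andb_prop in Hhk as [Hh Hk].
  apply Nat.eqb_eq in Hh; apply Nat.ltb_lt in Hk; subst.
  apply functional_extensionality; intro i. unfold jet_point, upd2, upd1.
  destruct (Nat.eqb_spec i k); subst.
  - now rewrite (proj2 (Nat.ltb_lt k l) Hk).
  - now destruct (i <? l)%nat.
Qed.

Lemma jet_point_upd2_other J h k x t : position_var h k = false ->
  jet_point (upd2 J h k x) t = jet_point J t.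
Proof.
  unfold position_var. intro Hhk. apply functional_extensionality; intro i. unfold jet_point, upd2.
  destruct (Nat.ltb_spec i l); auto.
  destruct (Nat.eqb_spec 0 h), (Nat.eqb_spec i k); subst; simpl; auto.
  simpl in Hhk. apply Nat.ltb_ge in Hhk. lia.
Qed.

Lemma derivable_jpd_var h k h' k' J t :
  derivable_pt_lim (fun x => jvar h' k' (upd2 J h k x) t) (J h k)
    (if (h' =? h)%nat && (k' =? k)%nat then 1 else 0).
Proof.
  unfold jvar, upd2. destruct (_ && _).
  - apply derivable_pt_lim_id.
  - apply derivable_pt_lim_const.
Qed.

Lemma derivable_jpd_smooth g h k J t : smooth_n (S l) g ->
  derivable_pt_lim (fun x => jsmooth g (upd2 J h k x) t) (J h k)
    (if position_var h k then jsmooth (pdv k g) J t else 0).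
Proof.
  intro Hg. unfold jsmooth. destruct (position_var h k) eqn:Hhk.
  - rewrite <- (jet_point_position J t h k Hhk).
    replace (fun x => g (jet_point (upd2 J h k x) t)) with (fun x => g (upd1 (jet_point J t) k x))
      by (apply functional_extensionality; intro x; now rewrite jet_point_upd2).
    apply (smooth_derivable (S l)); eauto using position_var_lt.
  - replace (fun x => g (jet_point (upd2 J h k x) t)) with (fun _ : R => g (jet_point J t))
      by (apply functional_extensionality; intro x; now rewrite jet_point_upd2_other).
    apply derivable_pt_lim_const.
Qed.

Lemma derivable_jdt_smooth g J t : smooth_n (S l) g ->
  derivable_pt_lim (fun s => jsmooth g J s) t (jsmooth (pdv l g) J t).
Proof.
  intro Hg. unfold jsmooth.
  replace (fun s => g (jet_point J s)) with (fun s => g (upd1 (jet_point J t) l s)).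
  - assert (Ht : jet_point J t l = t) by (unfold jet_point; now rewrite Nat.ltb_irrefl).
    generalize (smooth_derivable (S l) g l (jet_point J t) Hg (Nat.lt_succ_diag_r l)).
    now rewrite Ht.
  - apply functional_extensionality; intro s. apply (proj1 Hg); intros i Hi.
    unfold upd1, jet_point. destruct (Nat.eqb_spec i l) as [->|Hil].
    + now rewrite Nat.ltb_irrefl.
    + now rewrite (proj2 (Nat.ltb_lt i l)) by lia.
Qed.

Lemma jpd_derivable F h k J t : jet_poly F ->
  derivable_pt_lim (fun x => F (upd2 J h k x) t) (J h k) (jpd h k F J t).
Proof.
  intro HF. induction HF; unfold jpd at 1; eapply derivable_deriv.
  - apply derivable_pt_lim_const.
  - apply derivable_jpd_var.
  - now apply derivable_jpd_smooth.
  - exact (derivable_pt_lim_plus _ _ _ _ _ IHHF1 IHHF2).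
  - exact (derivable_pt_lim_mult _ _ _ _ _ IHHF1 IHHF2).
Qed.

Lemma jdt_derivable F J t : jet_poly F ->
  derivable_pt_lim (fun s => F J s) t (jdt F J t).
Proof.
  intro HF. induction HF; unfold jdt at 1; eapply derivable_deriv.
  - apply derivable_pt_lim_const.
  - apply derivable_pt_lim_const.
  - now apply derivable_jdt_smooth.
  - exact (derivable_pt_lim_plus _ _ _ _ _ IHHF1 IHHF2).
  - exact (derivable_pt_lim_mult _ _ _ _ _ IHHF1 IHHF2).
Qed.

Lemma jpd_const h k c : jpd h k (jconst c) = jconst 0.
Proof. jetfun_ext. apply deriv_unique, derivable_pt_lim_const. Qed.

Lemma jpd_var h k h' k' :
  jpd h k (jvar h' k') = jconst (if (h' =? h)%nat && (k' =? k)%nat then 1 else 0).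
Proof. jetfun_ext. apply deriv_unique, derivable_jpd_var. Qed.

Lemma jpd_smooth h k g : smooth_n (S l) g ->
  jpd h k (jsmooth g) = if position_var h k then jsmooth (pdv k g) else jconst 0.
Proof.
  intro Hg. jetfun_ext. unfold jpd. rewrite (deriv_unique _ _ _ (derivable_jpd_smooth g h k J t Hg)).
  now destruct (position_var h k).
Qed.

Lemma jpd_add h k F G : jet_poly F -> jet_poly G ->
  jpd h k (jadd F G) = jadd (jpd h k F) (jpd h k G).
Proof.
  intros HF HG. jetfun_ext. apply deriv_unique.
  exact (derivable_pt_lim_plus _ _ _ _ _ (jpd_derivable F h k J t HF) (jpd_derivable G h k J t HG)).
Qed.

Lemma jpd_mul h k F G : jet_poly F -> jet_poly G ->
  jpd h k (jmul F G) = jadd (jmul (jpd h k F) G) (jmul F (jpd h k G)).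
Proof.
  intros HF HG. jetfun_ext. apply deriv_unique.
  generalize (derivable_pt_lim_mult _ _ _ _ _ (jpd_derivable F h k J t HF) (jpd_derivable G h k J t HG)).
  now rewrite upd2_id.
Qed.

Lemma jdt_const c : jdt (jconst c) = jconst 0.
Proof. jetfun_ext. apply deriv_unique, derivable_pt_lim_const. Qed.

Lemma jdt_var h k : jdt (jvar h k) = jconst 0.
Proof. jetfun_ext. apply deriv_unique, derivable_pt_lim_const. Qed.

Lemma jdt_smooth g : smooth_n (S l) g -> jdt (jsmooth g) = jsmooth (pdv l g).
Proof. intro Hg. jetfun_ext. now apply deriv_unique, derivable_jdt_smooth. Qed.

Lemma jdt_add F G : jet_poly F -> jet_poly G -> jdt (jadd F G) = jadd (jdt F) (jdt G).
Proof.
  intros HF HG. jetfun_ext. apply deriv_unique.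
  exact (derivable_pt_lim_plus _ _ _ _ _ (jdt_derivable F J t HF) (jdt_derivable G J t HG)).
Qed.

Lemma jdt_mul F G : jet_poly F -> jet_poly G ->
  jdt (jmul F G) = jadd (jmul (jdt F) G) (jmul F (jdt G)).
Proof.
  intros HF HG. jetfun_ext. apply deriv_unique.
  exact (derivable_pt_lim_mult _ _ _ _ _ (jdt_derivable F J t HF) (jdt_derivable G J t HG)).
Qed.

Lemma jet_poly_jpd h k F : jet_poly F -> jet_poly (jpd h k F).
Proof.
  intro HF. induction HF.
  - rewrite jpd_const; auto.
  - rewrite jpd_var; auto.
  - rewrite jpd_smooth by auto. destruct (position_var h k) eqn:Hhk; auto.
    apply jet_poly_smooth, smooth_pdv; eauto using position_var_lt.
  - rewrite jpd_add; auto.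
  - rewrite jpd_mul; auto.
Qed.

Lemma jet_poly_jdt F : jet_poly F -> jet_poly (jdt F).
Proof.
  intro HF. induction HF.
  - rewrite jdt_const; auto.
  - rewrite jdt_var; auto.
  - rewrite jdt_smooth by auto. apply jet_poly_smooth, smooth_pdv; auto.
  - rewrite jdt_add; auto.
  - rewrite jdt_mul; auto.
Qed.

Lemma jet_poly_sum n F : (forall i, (i < n)%nat -> jet_poly (F i)) -> jet_poly (jsum n F).
Proof.
  induction n; intro HF.
  - exact (jet_poly_const 0).
  - rewrite jsum_S. apply jet_poly_add; [apply IHn|apply HF]; auto.
Qed.

#[local] Hint Resolve jet_poly_jpd jet_poly_jdt jet_poly_sum : core.

Lemma tder_jet K F : tder l K F =
  jadd (jdt F) (jsum (S K) (fun h => jsum l (fun k => jmul (jpd h k F) (jvar (S h) k)))).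
Proof. reflexivity. Qed.

Lemma jet_poly_tder K F : jet_poly F -> jet_poly (tder l K F).
Proof. intro HF. rewrite tder_jet. auto 6. Qed.


Lemma jpd_sum h k n F : (forall i, (i < n)%nat -> jet_poly (F i)) ->
  jpd h k (jsum n F) = jsum n (fun i => jpd h k (F i)).
Proof.
  induction n; intro HF.
  - exact (jpd_const h k 0).
  - rewrite !jsum_S, jpd_add, IHn; auto.
Qed.

Lemma jpd_jpd_comm h k h' k' F : jet_poly F -> jpd h k (jpd h' k' F) = jpd h' k' (jpd h k F).
Proof.
  intro HF. induction HF.
  - now rewrite !jpd_const.
  - now rewrite !jpd_var, !jpd_const.
  - rewrite (jpd_smooth h' k'), (jpd_smooth h k) by auto.
    destruct (position_var h' k') eqn:E', (position_var h k) eqn:E.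
    + rewrite !jpd_smooth, E, E' by (apply smooth_pdv; eauto using position_var_lt).
      jetfun_ext. apply (pdv_comm (S l)); eauto using position_var_lt.
    + now rewrite jpd_const, jpd_smooth, E by (apply smooth_pdv; eauto using position_var_lt).
    + now rewrite jpd_const, jpd_smooth, E' by (apply smooth_pdv; eauto using position_var_lt).
    + now rewrite !jpd_const.
  - rewrite !jpd_add by auto. now rewrite IHHF1, IHHF2.
  - rewrite !jpd_mul, !jpd_add, !jpd_mul by auto. rewrite IHHF1, IHHF2.
    jetfun_ext. unfold jadd, jmul. ring.
Qed.

Lemma jpd_jdt_comm h k F : jet_poly F -> jpd h k (jdt F) = jdt (jpd h k F).
Proof.
  intro HF. induction HF.
  - now rewrite jpd_const, !jdt_const, jpd_const.
  - now rewrite jpd_var, !jdt_var, jdt_const, jpd_const.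
  - rewrite jdt_smooth, !jpd_smooth by auto using smooth_pdv.
    destruct (position_var h k) eqn:E.
    + rewrite jdt_smooth by (apply smooth_pdv; eauto using position_var_lt).
      jetfun_ext. apply (pdv_comm (S l)); eauto using position_var_lt.
    + now rewrite jdt_const.
  - rewrite jpd_add, !jdt_add, jpd_add by auto. now rewrite IHHF1, IHHF2.
  - rewrite jdt_mul, jpd_mul, !jpd_add, !jdt_add, !jpd_mul, !jdt_mul by auto.
    rewrite IHHF1, IHHF2. jetfun_ext. unfold jadd, jmul. ring.
Qed.

Lemma tder_const K c : tder l K (jconst c) = jconst 0.
Proof.
  rewrite tder_jet, jdt_const. jetfun_ext. unfold jadd, jsum.
  rewrite sumR_zero; [unfold jconst; ring|]. intros h _.
  apply sumR_zero; intros k _. rewrite jpd_const. unfold jmul, jconst. ring.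
Qed.

Lemma tder_add K F G : jet_poly F -> jet_poly G ->
  tder l K (jadd F G) = jadd (tder l K F) (tder l K G).
Proof.
  intros HF HG. jetfun_ext.
  change (tder l K (jadd F G) J t = tder l K F J t + tder l K G J t). unfold tder.
  rewrite jdt_add by auto.
  rewrite (sumR_ext (S K) _ (fun h => sumR l (fun k => jpd h k F J t * J (S h) k)
                                    + sumR l (fun k => jpd h k G J t * J (S h) k))).
  - rewrite sumR_plus. unfold jadd. ring.
  - intros h _. rewrite <- sumR_plus. apply sumR_ext; intros k _.
    rewrite jpd_add by auto. unfold jadd. ring.
Qed.

Lemma tder_mul K F G : jet_poly F -> jet_poly G ->
  tder l K (jmul F G) = jadd (jmul (tder l K F) G) (jmul F (tder l K G)).
Proof.
  intros HF HG. jetfun_ext.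
  change (tder l K (jmul F G) J t = tder l K F J t * G J t + F J t * tder l K G J t).
  unfold tder. rewrite jdt_mul by auto.
  rewrite (sumR_ext (S K) _ (fun h => G J t * sumR l (fun k => jpd h k F J t * J (S h) k)
                                    + F J t * sumR l (fun k => jpd h k G J t * J (S h) k))).
  - rewrite sumR_plus, !sumR_scal. unfold jadd, jmul. ring.
  - intros h _. rewrite <- !sumR_scal, <- sumR_plus. apply sumR_ext; intros k _.
    rewrite jpd_mul by auto. unfold jadd, jmul. ring.
Qed.

Lemma tder_scale K c F : jet_poly F -> tder l K (jmul (jconst c) F) = jmul (jconst c) (tder l K F).
Proof.
  intro HF. rewrite tder_mul, tder_const by auto. jetfun_ext. unfold jadd, jmul, jconst. ring.
Qed.

Lemma tder_sum K n F : (forall i, (i < n)%nat -> jet_poly (F i)) ->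
  tder l K (jsum n F) = jsum n (fun i => tder l K (F i)).
Proof.
  induction n; intro HF.
  - exact (tder_const K 0).
  - rewrite !jsum_S, tder_add, IHn; auto.
Qed.

Lemma jpd_tder h k K F : (k < l)%nat -> jet_poly F ->
  jpd h k (tder l K F) =
  jadd (tder l K (jpd h k F)) (jsum (S K) (fun h' => if (h =? S h')%nat then jpd h' k F else jconst 0)).
Proof.
  intros Hk HF. rewrite (tder_jet K F), jpd_add, jpd_jdt_comm, jpd_sum by auto 6.
  rewrite (jsum_ext (S K) _ (fun h' =>
    jadd (jsum l (fun k' => jmul (jpd h' k' (jpd h k F)) (jvar (S h') k')))
         (if (h =? S h')%nat then jpd h' k F else jconst 0))).
  - jetfun_ext. unfold tder, jadd, jsum, jmul, jvar. rewrite sumR_plus. ring.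
  - intros h' _. rewrite jpd_sum by auto. jetfun_ext. unfold jadd, jsum.
    rewrite (sumR_ext l _ (fun k' => jmul (jpd h' k' (jpd h k F)) (jvar (S h') k') J t
               + if (k' =? k)%nat then (if (h =? S h')%nat then jpd h' k F else jconst 0) J t else 0)).
    + now rewrite sumR_plus, sumR_delta, (proj2 (Nat.ltb_lt k l) Hk).
    + intros k' _. rewrite jpd_mul, jpd_var, jpd_jpd_comm by auto. unfold jadd, jmul, jconst, jvar.
      destruct (Nat.eqb_spec (S h') h), (Nat.eqb_spec k' k), (Nat.eqb_spec h (S h')); subst;
        simpl; try lia; ring.
Qed.

Lemma jpd_tder_0 k K F : (k < l)%nat -> jet_poly F ->
  jpd 0 k (tder l K F) = tder l K (jpd 0 k F).
Proof.
  intros Hk HF. rewrite jpd_tder by auto. jetfun_ext. unfold jadd, jsum.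
  rewrite sumR_zero; [ring|]. reflexivity.
Qed.

Lemma jpd_tder_S h k K F : (k < l)%nat -> (h <= K)%nat -> jet_poly F ->
  jpd (S h) k (tder l K F) = jadd (tder l K (jpd (S h) k F)) (jpd h k F).
Proof.
  intros Hk HhK HF. rewrite jpd_tder by auto. jetfun_ext. unfold jadd, jsum. f_equal.
  rewrite (sumR_ext (S K) _ (fun h' => if (h' =? h)%nat then jpd h' k F J t else 0)).
  - rewrite sumR_delta, (proj2 (Nat.ltb_lt h (S K))) by lia. reflexivity.
  - intros h' _. simpl. rewrite Nat.eqb_sym. now destruct (Nat.eqb_spec h' h); subst.
Qed.

Definition jet_order_le (K : nat) (F : JetFun) : Prop :=
  forall J J' t, (forall h k, (h <= K)%nat -> J h k = J' h k) -> F J t = F J' t.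

Lemma jpd_above_order h k K F : jet_order_le K F -> (K < h)%nat -> jpd h k F = jconst 0.
Proof.
  intros HF Hh. jetfun_ext. apply deriv_const_fun. intro x. apply HF.
  intros h' k' Hh'. unfold upd2. destruct (Nat.eqb_spec h' h); [lia|reflexivity].
Qed.

Lemma jet_order_le_jpd h k K F : jet_order_le K F -> jet_order_le K (jpd h k F).
Proof.
  intros HF. destruct (Nat.le_gt_cases h K) as [Hh|Hh].
  - intros J J' t HJ. unfold jpd. rewrite (HJ h k Hh). f_equal.
    apply functional_extensionality; intro x. apply HF. intros h' k' Hh'.
    unfold upd2. destruct (_ && _); auto.
  - rewrite (jpd_above_order h k K F HF Hh). now intros J J' t _.
Qed.

Lemma jet_order_le_tder K F : jet_order_le K F -> jet_order_le (S K) (tder l K F).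
Proof.
  intros HF J J' t HJ. unfold tder, jdt. f_equal.
  - f_equal. apply functional_extensionality; intro s. apply HF. intros; apply HJ. lia.
  - apply sumR_ext; intros h Hh. apply sumR_ext; intros k _.
    rewrite (HJ (S h) k) by lia. f_equal.
    apply (jet_order_le_jpd h k K F HF). intros; apply HJ. lia.
Qed.

Lemma tder_order K K' F : jet_order_le K F -> (K <= K')%nat -> tder l K' F = tder l K F.
Proof.
  intros HF HK. jetfun_ext. unfold tder. f_equal.
  apply sumR_vanishing_tail; [lia|]. intros h Hh. apply sumR_zero; intros k _.
  rewrite (jpd_above_order h k K F HF) by lia. unfold jconst. ring.
Qed.

Section Mechanics.
Variables (N : nat) (m : nat -> R) (X : nat -> (nat -> R) -> R -> R).
Hypothesis X_config : smooth_config N l X.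

Lemma Xh_0_smooth j : (j < 3 * N)%nat -> Xh l X 0 j = jsmooth (fun z => X j z (z l)).
Proof.
  intro Hj. jetfun_ext. unfold jsmooth, jet_point at 2. rewrite Nat.ltb_irrefl.
  apply (proj1 (X_config j Hj)). intros i Hi. unfold jet_point.
  now rewrite (proj2 (Nat.ltb_lt i l) Hi).
Qed.

Lemma Xh_S h j : Xh l X (S h) j = tder l h (Xh l X h j).
Proof. reflexivity. Qed.

Lemma jet_poly_Xh h j : (j < 3 * N)%nat -> jet_poly (Xh l X h j).
Proof.
  intro Hj. induction h.
  - rewrite Xh_0_smooth by auto. exact (jet_poly_smooth _ (proj2 (X_config j Hj))).
  - rewrite Xh_S. now apply jet_poly_tder.
Qed.

Lemma jet_order_le_Xh h j : jet_order_le h (Xh l X h j).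
Proof.
  induction h.
  - intros J J' t HJ. change (X j (J 0%nat) t = X j (J' 0%nat) t).
    now rewrite (functional_extensionality (J 0%nat) (J' 0%nat) (fun k => HJ 0%nat k (le_n 0))).
  - rewrite Xh_S. now apply jet_order_le_tder.
Qed.

#[local] Hint Resolve jet_poly_Xh jet_order_le_Xh : core.

Lemma jpd_Xh_diag n j k : (j < 3 * N)%nat -> (k < l)%nat ->
  jpd n k (Xh l X n j) = jpd 0 k (Xh l X 0 j).
Proof.
  intros Hj Hk. induction n; auto.
  rewrite Xh_S, jpd_tder_S, (jpd_above_order (S n) k n), tder_const, IHn by auto.
  jetfun_ext. unfold jadd, jconst. ring.
Qed.

Lemma jpd_Xh_succ n j k : (j < 3 * N)%nat -> (k < l)%nat ->
  jpd n k (Xh l X (S n) j) = jmul (jconst (INR (S n))) (tder l 0 (jpd 0 k (Xh l X 0 j))).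
Proof.
  intros Hj Hk. induction n.
  - rewrite Xh_S, jpd_tder_0 by auto. jetfun_ext. unfold jmul, jconst. simpl. ring.
  - rewrite Xh_S, jpd_tder_S, jpd_Xh_diag, IHn by auto.
    rewrite (tder_order 0 (S n)) by (auto using jet_order_le_jpd; lia).
    jetfun_ext. unfold jadd, jmul, jconst. rewrite (S_INR (S n)). ring.
Qed.

Lemma Qh_Xh r j : (j < 3 * N)%nat -> Qh l m X r j = jmul (jconst (m (j / 3)%nat)) (Xh l X (S r) j).
Proof.
  intro Hj. induction r; [reflexivity|].
  change (Qh l m X (S r) j) with (tder l (S r) (Qh l m X r j)).
  now rewrite IHr, tder_scale by auto.
Qed.

Lemma jpd_Tr h k r : jpd h k (Tr N l m X r) =
  jsum (3 * N) (fun j => jmul (jconst (m (j / 3)%nat)) (jmul (Xh l X (S r) j) (jpd h k (Xh l X (S r) j)))).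
Proof.
  change (Tr N l m X r) with
    (jmul (jconst (/ 2)) (jsum (3 * N) (fun j => jmul (Qh l m X r j) (Xh l X (S r) j)))).
  rewrite (jsum_ext (3 * N) (fun j => jmul (Qh l m X r j) (Xh l X (S r) j))
    (fun j => jmul (jconst (m (j / 3)%nat)) (jmul (Xh l X (S r) j) (Xh l X (S r) j)))).
  2:{ intros j Hj. rewrite Qh_Xh by auto. jetfun_ext. unfold jmul. ring. }
  rewrite jpd_mul, jpd_const, jpd_sum by auto 6.
  rewrite (jsum_ext (3 * N)
    (fun j => jpd h k (jmul (jconst (m (j / 3)%nat)) (jmul (Xh l X (S r) j) (Xh l X (S r) j))))
    (fun j => jmul (jconst (2 * m (j / 3)%nat))
                                         (jmul (Xh l X (S r) j) (jpd h k (Xh l X (S r) j))))).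
  - jetfun_ext. cbv [jadd jmul jconst jsum].
    rewrite Rmult_0_l, Rplus_0_l, <- sumR_scal. apply sumR_ext; intros j _. field.
  - intros j Hj. rewrite jpd_mul, jpd_const, jpd_mul by auto.
    jetfun_ext. cbv [jadd jmul jconst]. ring.
Qed.

Lemma jpd_top_Tr r k : (k < l)%nat -> jpd (S r) k (Tr N l m X r) =
  jsum (3 * N) (fun j => jmul (jconst (m (j / 3)%nat)) (jmul (Xh l X (S r) j) (jpd 0 k (Xh l X 0 j)))).
Proof.
  intro Hk. rewrite jpd_Tr. apply jsum_ext; intros j Hj. now rewrite jpd_Xh_diag.
Qed.

Lemma jpd_sub_Tr r k : (k < l)%nat -> jpd r k (Tr N l m X r) =
  jsum (3 * N) (fun j => jmul (jconst (INR (S r) * m (j / 3)%nat))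
                           (jmul (Xh l X (S r) j) (tder l 0 (jpd 0 k (Xh l X 0 j))))).
Proof.
  intro Hk. rewrite jpd_Tr. apply jsum_ext; intros j Hj. rewrite jpd_Xh_succ by auto.
  jetfun_ext. cbv [jmul jconst]. ring.
Qed.

End Mechanics.
End JetCalculus.

Theorem proposition1p4 (N l : nat) (m : nat -> R) (X : nat -> (nat -> R) -> R -> R)
  (Hm : forall i, (i < N)%nat -> 0 < m i)
  (HX : smooth_config N l X) (r : nat) :
  forall k, (k < l)%nat -> forall (J : Jet) (t : R),
    sumR (3 * N) (fun j => Qh l m X (S r) j J t * jpd 0 k (fun J' t' => X j (J' 0%nat) t') J t)
    = tder l (S r) (jpd (S r) k (Tr N l m X r)) J t
      - / (INR r + 1) * jpd r k (Tr N l m X r) J t.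
Proof.
  intros k Hk J t.
  assert (HXj : forall h j, (j < 3 * N)%nat -> jet_poly l (Xh l X h j)) by apply (jet_poly_Xh l N X HX).
  rewrite (jpd_top_Tr l N m X HX), (jpd_sub_Tr l N m X HX), tder_sum
    by (intros; auto using jet_poly_mul, jet_poly_const, jet_poly_jpd).
  unfold jsum. rewrite <- sumR_scal, <- sumR_minus. apply sumR_ext; intros j Hj.
  change (fun J' t' => X j (J' 0%nat) t') with (Xh l X 0 j).
  set (dX := jpd 0 k (Xh l X 0 j)).
  assert (dX_order : jet_order_le 0 dX) by apply jet_order_le_jpd, jet_order_le_Xh.
  assert (dX_poly : jet_poly l dX) by (apply jet_poly_jpd; auto).
  rewrite tder_scale, tder_mul, (tder_order l 0 (S r) dX), (Qh_Xh l N m X HX), Xh_S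
    by (auto using jet_poly_mul; lia).
  cbv [jadd jmul jconst]. rewrite S_INR. field. pose proof (pos_INR r). lra.
Qed.
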